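(* $\mathsf{MGrz}\vee\mathsf{GKur}=\mathsf{MGrz}\vee\mathsf{LKur}=\mathsf{MGrz}\vee\mathsf{N}$, where $\vee$ denotes the smallest extension of $\mathsf{MS4}$ containing both logics.
   Context: $\mathsf{MIPC}$ is the smallest set of formulas in the bimodal language $\mathcal{L}_{\forall\exists}$ containing all theorems of $\mathsf{IPC}$; $\forall(p\wedge q)\leftrightarrow(\forall p\wedge\forall q)$, $\forall p\to p$, $\forall p\to\forall\forall p$; $\exists(p\vee q)\leftrightarrow(\exists p\vee\exists q)$, $p\to\exists p$, $\exists\exists p\to\exists p$, $(\exists p\wedge\exists q)\to\exists(\exists p\wedge q)$; $\exists\forall p\to\forall p$, $\exists p\to\forall\exists p$; closed under modus ponens, substitution and $\varphi/\forall\varphi$. $\mathsf{Kur}=\mathsf{MIPC}+\forall\neg\neg p\to\neg\neg\forall p$. $\mathsf{MS4}$ is the smallest set of formulas in the classical bimodal language $\mathcal{L}_{\Box\forall}$ containing all classical tautologies, the $\mathsf{S4}$ axioms for $\Box$, the $\mathsf{S5}$ axioms for $\forall$, and $\Box\forall p\to\forall\Box p$, closed under modus ponens, substitution, $\Box$- and $\forall$-necessitation; $\Diamond=\neg\Box\neg$, $\exists=\neg\forall\neg$. $\mathsf{MGrz}=\mathsf{MS4}+\Box(\Box(p\to\Box p)\to p)\to p$; $\mathsf{LKur}=\mathsf{MS4}+\Box\forall\Diamond\Box p\to\Diamond\forall p$; $\mathsf{N}=\mathsf{MS4}+\Box\exists p\to\Diamond\exists\Box p$; $\mathsf{GKur}=\mathsf{MS4}+\{\varphi^t:\mathsf{Kur}\vdash\varphi\}$,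 where $(-)^t$ is the Gödel translation: $\bot^t=\bot$, $p^t=\Box p$, $(\varphi\wedge\psi)^t=\varphi^t\wedge\psi^t$, $(\varphi\vee\psi)^t=\varphi^t\vee\psi^t$, $(\varphi\to\psi)^t=\Box(\neg\varphi^t\vee\psi^t)$, $(\forall\varphi)^t=\Box\forall\varphi^t$, $(\exists\varphi)^t=\exists\varphi^t$. *)

From Stdlib Require Import Bool.

Inductive ifml : Type :=
| IVar : nat -> ifml
| IBot : ifml
| IAnd : ifml -> ifml -> ifml
| IOr  : ifml -> ifml -> ifml
| IImp : ifml -> ifml -> ifml
| IAll : ifml -> ifml
| IEx  : ifml -> ifml.

Definition INeg (a : ifml) : ifml := IImp a IBot.
Definition IIff (a b : ifml) : ifml := IAnd (IImp a b) (IImp b a).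

Fixpoint isubst (s : nat -> ifml) (a : ifml) : ifml :=
  match a with
  | IVar n => s n
  | IBot => IBot
  | IAnd a b => IAnd (isubst s a) (isubst s b)
  | IOr a b => IOr (isubst s a) (isubst s b)
  | IImp a b => IImp (isubst s a) (isubst s b)
  | IAll a => IAll (isubst s a)
  | IEx a => IEx (isubst s a)
  end.

(* Theorems of IPC (Hilbert calculus: axiom schemes + modus ponens),
   formulated over the whole language (modal subformulas act as atoms,
   i.e. these are exactly the substitution instances of IPC theorems). *)
Inductive IPC_thm : ifml -> Prop :=
| ipc_ax1 a b : IPC_thm (IImp a (IImp b a))
| ipc_ax2 a b c : IPC_thm (IImp (IImp a (IImp b c)) (IImp (IImp a b) (IImp a c)))
| ipc_ax3 a b : IPC_thm (IImp (IAnd a b) a)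
| ipc_ax4 a b : IPC_thm (IImp (IAnd a b) b)
| ipc_ax5 a b : IPC_thm (IImp a (IImp b (IAnd a b)))
| ipc_ax6 a b : IPC_thm (IImp a (IOr a b))
| ipc_ax7 a b : IPC_thm (IImp b (IOr a b))
| ipc_ax8 a b c : IPC_thm (IImp (IImp a c) (IImp (IImp b c) (IImp (IOr a b) c)))
| ipc_ax9 a : IPC_thm (IImp IBot a)
| ipc_mp a b : IPC_thm (IImp a b) -> IPC_thm a -> IPC_thm b.

Definition ip : ifml := IVar 0.
Definition iq : ifml := IVar 1.

Inductive MIPC_axiom : ifml -> Prop :=
| mipc_a1 : MIPC_axiom (IIff (IAll (IAnd ip iq)) (IAnd (IAll ip) (IAll iq)))
| mipc_a2 : MIPC_axiom (IImp (IAll ip) ip)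
| mipc_a3 : MIPC_axiom (IImp (IAll ip) (IAll (IAll ip)))
| mipc_a4 : MIPC_axiom (IIff (IEx (IOr ip iq)) (IOr (IEx ip) (IEx iq)))
| mipc_a5 : MIPC_axiom (IImp ip (IEx ip))
| mipc_a6 : MIPC_axiom (IImp (IEx (IEx ip)) (IEx ip))
| mipc_a7 : MIPC_axiom (IImp (IAnd (IEx ip) (IEx iq)) (IEx (IAnd (IEx ip) iq)))
| mipc_a8 : MIPC_axiom (IImp (IEx (IAll ip)) (IAll ip))
| mipc_a9 : MIPC_axiom (IImp (IEx ip) (IAll (IEx ip))).

Inductive MIPC_ext (G : ifml -> Prop) : ifml -> Prop :=
| mipcx_ipc a : IPC_thm a -> MIPC_ext G a
| mipcx_ax a : MIPC_axiom a -> MIPC_ext G a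
| mipcx_extra a : G a -> MIPC_ext G a
| mipcx_mp a b : MIPC_ext G (IImp a b) -> MIPC_ext G a -> MIPC_ext G b
| mipcx_subst s a : MIPC_ext G a -> MIPC_ext G (isubst s a)
| mipcx_nec a : MIPC_ext G a -> MIPC_ext G (IAll a).

Definition MIPC : ifml -> Prop := MIPC_ext (fun _ => False).

Definition kur_axiom : ifml :=
  IImp (IAll (INeg (INeg ip))) (INeg (INeg (IAll ip))).
Definition Kur : ifml -> Prop := MIPC_ext (fun a => a = kur_axiom).

Inductive cfml : Type :=
| CVar : nat -> cfml
| CBot : cfml
| CAnd : cfml -> cfml -> cfml
| COr  : cfml -> cfml -> cfml
| CImp : cfml -> cfml -> cfml
| CBox : cfml -> cfml
| CAll : cfml -> cfml.

Definition CNeg (a : cfml) : cfml := CImp a CBot.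
Definition CDia (a : cfml) : cfml := CNeg (CBox (CNeg a)).
Definition CEx  (a : cfml) : cfml := CNeg (CAll (CNeg a)).

Fixpoint csubst (s : nat -> cfml) (a : cfml) : cfml :=
  match a with
  | CVar n => s n
  | CBot => CBot
  | CAnd a b => CAnd (csubst s a) (csubst s b)
  | COr a b => COr (csubst s a) (csubst s b)
  | CImp a b => CImp (csubst s a) (csubst s b)
  | CBox a => CBox (csubst s a)
  | CAll a => CAll (csubst s a)
  end.

(* Classical tautologies: true under every boolean valuation of all formulas
   that respects the propositional connectives (modal formulas are atoms). *)
Definition boolean_valuation (f : cfml -> bool) : Prop :=
  f CBot = false /\
  (forall a b, f (CAnd a b) = f a && f b) /\
  (forall a b, f (COr a b) = f a || f b) /\
  (forall a b, f (CImp a b) = implb (f a) (f b)).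

Definition tautology (a : cfml) : Prop :=
  forall f, boolean_valuation f -> f a = true.

Definition cp : cfml := CVar 0.
Definition cq : cfml := CVar 1.

Inductive MS4_axiom : cfml -> Prop :=
| ms4_boxK : MS4_axiom (CImp (CBox (CImp cp cq)) (CImp (CBox cp) (CBox cq)))
| ms4_boxT : MS4_axiom (CImp (CBox cp) cp)
| ms4_box4 : MS4_axiom (CImp (CBox cp) (CBox (CBox cp)))
| ms4_allK : MS4_axiom (CImp (CAll (CImp cp cq)) (CImp (CAll cp) (CAll cq)))
| ms4_allT : MS4_axiom (CImp (CAll cp) cp)
| ms4_all5 : MS4_axiom (CImp (CEx cp) (CAll (CEx cp)))
| ms4_mix  : MS4_axiom (CImp (CBox (CAll cp)) (CAll (CBox cp))).

Inductive MS4_ext (G : cfml -> Prop) : cfml -> Prop :=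
| ms4x_taut a : tautology a -> MS4_ext G a
| ms4x_ax a : MS4_axiom a -> MS4_ext G a
| ms4x_extra a : G a -> MS4_ext G a
| ms4x_mp a b : MS4_ext G (CImp a b) -> MS4_ext G a -> MS4_ext G b
| ms4x_subst s a : MS4_ext G a -> MS4_ext G (csubst s a)
| ms4x_necbox a : MS4_ext G a -> MS4_ext G (CBox a)
| ms4x_necall a : MS4_ext G a -> MS4_ext G (CAll a).

Definition MS4 : cfml -> Prop := MS4_ext (fun _ => False).

Definition join (L1 L2 : cfml -> Prop) : cfml -> Prop :=
  MS4_ext (fun a => L1 a \/ L2 a).

Definition grz_axiom : cfml :=
  CImp (CBox (CImp (CBox (CImp cp (CBox cp))) cp)) cp.
Definition MGrz : cfml -> Prop := MS4_ext (fun a => a = grz_axiom).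

Definition lkur_axiom : cfml :=
  CImp (CBox (CAll (CDia (CBox cp)))) (CDia (CAll cp)).
Definition LKur : cfml -> Prop := MS4_ext (fun a => a = lkur_axiom).

Definition n_axiom : cfml :=
  CImp (CBox (CEx cp)) (CDia (CEx (CBox cp))).
Definition N : cfml -> Prop := MS4_ext (fun a => a = n_axiom).

Fixpoint godel (a : ifml) : cfml :=
  match a with
  | IVar n => CBox (CVar n)
  | IBot => CBot
  | IAnd a b => CAnd (godel a) (godel b)
  | IOr a b => COr (godel a) (godel b)
  | IImp a b => CBox (COr (CNeg (godel a)) (godel b))
  | IAll a => CBox (CAll (godel a))
  | IEx a => CEx (godel a)
  end.

Definition GKur : cfml -> Prop :=
  MS4_ext (fun a => exists b, Kur b /\ a = godel b).


(** Over MS4, the Grzegorczyk axiom proves the McKinsey axiom [□◇p ⊃ ◇□p]: if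
    [□◇p] held together with [□¬□p], then by Grz some reachable world would
    satisfy [p ∧ □(¬p ⊃ □¬p)]; together with [□◇p] this forces [□p] there,
    contradicting [□¬□p].
    Over MS4 the Gödel translation of the Kur axiom is interderivable with
    [□∀□◇□p ⊃ □◇□∀□p]; this yields LKur outright, and conversely LKur together
    with McKinsey yields it.  Similarly N yields LKur outright, while LKur with
    McKinsey yields N.  Finally, GKur is axiomatised over MS4 by the
    translation of the Kur axiom alone: the translation maps MIPC into MS4,
    and commutes with substitution up to equivalence because translated
    formulas are [□]-stable. *)

Local Notation "⊥" := CBot.
Local Notation "¬ a" := (CNeg a) (at level 35, right associativity).
Local Notation "□ a" := (CBox a) (at level 35, right associativity).
Local Notation "◇ a" := (CDia a) (at level 35, right associativity).
Local Notation "'Ɐ' a" := (CAll a) (at level 35, right associativity).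
Local Notation "'Ǝ' a" := (CEx a) (at level 35, right associativity).
Local Infix "∧" := CAnd (at level 40, left associativity).
Local Infix "∨" := COr (at level 45, left associativity).
Local Infix "⊃" := CImp (at level 55, right associativity).
Local Notation "a ⥽ b" := (□ (¬ a ∨ b)) (at level 55, right associativity).

Definition subst_p (a : cfml) : nat -> cfml :=
  fun n => match n with 0 => a | _ => CVar n end.

Definition subst_pq (a b : cfml) : nat -> cfml :=
  fun n => match n with 0 => a | 1 => b | _ => CVar n end.

Ltac truth_table :=
  let f := fresh "f" in
  let Hbot := fresh "Hbot" in let Hand := fresh "Hand" in
  let Hor := fresh "Hor" in let Himp := fresh "Himp" in
  intros f (Hbot & Hand & Hor & Himp);
  repeat match goal with x := _ |- _ => subst x end;
  try unfold CDia, CEx; try unfold CNeg;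
  repeat first [rewrite Hbot | rewrite Hand | rewrite Hor | rewrite Himp];
  repeat match goal with |- context [f ?x] => destruct (f x) end;
  reflexivity.

Section MS4_derivations.

Variable G : cfml -> Prop.

Local Notation "⊢ a" := (MS4_ext G a) (at level 60).

Lemma taut_thm a : tautology a -> ⊢ a.
Proof. exact (ms4x_taut G a). Qed.

Lemma mp_taut1 a b : ⊢ a -> tautology (a ⊃ b) -> ⊢ b.
Proof. intros Ha Hab. exact (ms4x_mp G _ _ (taut_thm _ Hab) Ha). Qed.

Lemma mp_taut2 a b c : ⊢ a -> ⊢ b -> tautology (a ⊃ b ⊃ c) -> ⊢ c.
Proof. intros Ha Hb Habc. exact (ms4x_mp G _ _ (mp_taut1 _ _ Ha Habc) Hb). Qed.

Lemma mp_taut3 a b c d :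
  ⊢ a -> ⊢ b -> ⊢ c -> tautology (a ⊃ b ⊃ c ⊃ d) -> ⊢ d.
Proof. intros Ha Hb Hc H. exact (ms4x_mp G _ _ (mp_taut2 _ _ _ Ha Hb H) Hc). Qed.

Lemma imp_trans a b c : ⊢ a ⊃ b -> ⊢ b ⊃ c -> ⊢ a ⊃ c.
Proof. intros Hab Hbc. apply (mp_taut2 _ _ _ Hab Hbc); truth_table. Qed.

Lemma contrapos a b : ⊢ a ⊃ b -> ⊢ ¬ b ⊃ ¬ a.
Proof. intro H. apply (mp_taut1 _ _ H); truth_table. Qed.

Lemma and_intro a b : ⊢ a -> ⊢ b -> ⊢ a ∧ b.
Proof. intros Ha Hb. apply (mp_taut2 _ _ _ Ha Hb); truth_table. Qed.

Lemma box_nec a : ⊢ a -> ⊢ □ a.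
Proof. exact (ms4x_necbox G a). Qed.

Lemma all_nec a : ⊢ a -> ⊢ Ɐ a.
Proof. exact (ms4x_necall G a). Qed.

Lemma box_K a b : ⊢ □ (a ⊃ b) ⊃ □ a ⊃ □ b.
Proof. exact (ms4x_subst G (subst_pq a b) _ (ms4x_ax G _ ms4_boxK)). Qed.

Lemma box_T a : ⊢ □ a ⊃ a.
Proof. exact (ms4x_subst G (subst_p a) _ (ms4x_ax G _ ms4_boxT)). Qed.

Lemma box_4 a : ⊢ □ a ⊃ □ □ a.
Proof. exact (ms4x_subst G (subst_p a) _ (ms4x_ax G _ ms4_box4)). Qed.

Lemma all_K a b : ⊢ Ɐ (a ⊃ b) ⊃ Ɐ a ⊃ Ɐ b.
Proof. exact (ms4x_subst G (subst_pq a b) _ (ms4x_ax G _ ms4_allK)). Qed.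

Lemma all_T a : ⊢ Ɐ a ⊃ a.
Proof. exact (ms4x_subst G (subst_p a) _ (ms4x_ax G _ ms4_allT)). Qed.

Lemma all_5 a : ⊢ Ǝ a ⊃ Ɐ Ǝ a.
Proof. exact (ms4x_subst G (subst_p a) _ (ms4x_ax G _ ms4_all5)). Qed.

Lemma box_all a : ⊢ □ Ɐ a ⊃ Ɐ □ a.
Proof. exact (ms4x_subst G (subst_p a) _ (ms4x_ax G _ ms4_mix)). Qed.

Lemma box_mono a b : ⊢ a ⊃ b -> ⊢ □ a ⊃ □ b.
Proof. intro H. exact (ms4x_mp G _ _ (box_K a b) (box_nec _ H)). Qed.

Lemma all_mono a b : ⊢ a ⊃ b -> ⊢ Ɐ a ⊃ Ɐ b.
Proof. intro H. exact (ms4x_mp G _ _ (all_K a b) (all_nec _ H)). Qed.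

Lemma dia_mono a b : ⊢ a ⊃ b -> ⊢ ◇ a ⊃ ◇ b.
Proof. intro H. exact (contrapos _ _ (box_mono _ _ (contrapos _ _ H))). Qed.

Lemma ex_mono a b : ⊢ a ⊃ b -> ⊢ Ǝ a ⊃ Ǝ b.
Proof. intro H. exact (contrapos _ _ (all_mono _ _ (contrapos _ _ H))). Qed.

Lemma boxed_imp_box a b : ⊢ □ a ⊃ b -> ⊢ □ a ⊃ □ b.
Proof. intro H. exact (imp_trans _ _ _ (box_4 a) (box_mono _ _ H)). Qed.

Lemma box_and a b : ⊢ □ a ∧ □ b ⊃ □ (a ∧ b).
Proof.
  assert (H : ⊢ □ a ⊃ □ (b ⊃ a ∧ b)) by (apply box_mono, taut_thm; truth_table).
  apply (mp_taut2 _ _ _ H (box_K b (a ∧ b))); truth_table.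
Qed.

Lemma all_and a b : ⊢ Ɐ a ∧ Ɐ b ⊃ Ɐ (a ∧ b).
Proof.
  assert (H : ⊢ Ɐ a ⊃ Ɐ (b ⊃ a ∧ b)) by (apply all_mono, taut_thm; truth_table).
  apply (mp_taut2 _ _ _ H (all_K b (a ∧ b))); truth_table.
Qed.

Lemma box_or a b : ⊢ □ a ∨ □ b ⊃ □ (a ∨ b).
Proof.
  assert (Ha : ⊢ □ a ⊃ □ (a ∨ b)) by (apply box_mono, taut_thm; truth_table).
  assert (Hb : ⊢ □ b ⊃ □ (a ∨ b)) by (apply box_mono, taut_thm; truth_table).
  apply (mp_taut2 _ _ _ Ha Hb); truth_table.
Qed.

Lemma ex_K a b : ⊢ Ɐ (a ⊃ b) ⊃ Ǝ a ⊃ Ǝ b.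
Proof.
  assert (H : ⊢ Ɐ (a ⊃ b) ⊃ Ɐ (¬ b ⊃ ¬ a)) by (apply all_mono, taut_thm; truth_table).
  apply (mp_taut2 _ _ _ H (all_K (¬ b) (¬ a))); truth_table.
Qed.

Lemma ex_T a : ⊢ a ⊃ Ǝ a.
Proof. apply (mp_taut1 _ _ (all_T (¬ a))); truth_table. Qed.

Lemma dia_4 a : ⊢ ◇ ◇ a ⊃ ◇ a.
Proof.
  assert (H : ⊢ □ ¬ a ⊃ □ ¬ ◇ a).
  { apply boxed_imp_box, (mp_taut1 _ _ (box_4 (¬ a))); truth_table. }
  exact (contrapos _ _ H).
Qed.

Lemma all_B a : ⊢ a ⊃ Ɐ Ǝ a.
Proof. exact (imp_trans _ _ _ (ex_T a) (all_5 a)). Qed.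

Lemma ex_all a : ⊢ Ǝ Ɐ a ⊃ Ɐ a.
Proof.
  assert (dne : ⊢ Ɐ ¬ ¬ a ⊃ Ɐ a) by (apply all_mono, taut_thm; truth_table).
  assert (dni : ⊢ Ɐ a ⊃ Ɐ ¬ ¬ a) by (apply all_mono, taut_thm; truth_table).
  assert (H : ⊢ Ɐ Ǝ ¬ a ⊃ Ɐ ¬ Ɐ a) by (apply all_mono, (mp_taut1 _ _ dni); truth_table).
  apply (mp_taut3 _ _ _ _ dne (all_5 (¬ a)) H); truth_table.
Qed.

Lemma all_4 a : ⊢ Ɐ a ⊃ Ɐ Ɐ a.
Proof. exact (imp_trans _ _ _ (all_B (Ɐ a)) (all_mono _ _ (ex_all a))). Qed.

Lemma ex_4 a : ⊢ Ǝ Ǝ a ⊃ Ǝ a.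
Proof.
  assert (H : ⊢ Ɐ Ɐ ¬ a ⊃ Ɐ ¬ Ǝ a) by (apply all_mono, taut_thm; truth_table).
  exact (contrapos _ _ (imp_trans _ _ _ (all_4 (¬ a)) H)).
Qed.

Lemma ex_and_ex a b : ⊢ Ǝ a ∧ Ǝ b ⊃ Ǝ (Ǝ a ∧ b).
Proof.
  assert (H : ⊢ Ɐ Ǝ a ⊃ Ɐ (b ⊃ Ǝ a ∧ b)) by (apply all_mono, taut_thm; truth_table).
  apply (mp_taut3 _ _ _ _ (all_5 a) H (ex_K b (Ǝ a ∧ b))); truth_table.
Qed.

Lemma ex_or a b : ⊢ Ǝ (a ∨ b) ⊃ Ǝ a ∨ Ǝ b.
Proof.
  assert (H : ⊢ Ɐ (¬ a ∧ ¬ b) ⊃ Ɐ ¬ (a ∨ b)) by (apply all_mono, taut_thm; truth_table).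
  apply (mp_taut2 _ _ _ (all_and (¬ a) (¬ b)) H); truth_table.
Qed.

Lemma or_ex a b : ⊢ Ǝ a ∨ Ǝ b ⊃ Ǝ (a ∨ b).
Proof.
  assert (Ha : ⊢ Ǝ a ⊃ Ǝ (a ∨ b)) by (apply ex_mono, taut_thm; truth_table).
  assert (Hb : ⊢ Ǝ b ⊃ Ǝ (a ∨ b)) by (apply ex_mono, taut_thm; truth_table).
  apply (mp_taut2 _ _ _ Ha Hb); truth_table.
Qed.

Lemma ex_box a : ⊢ Ǝ □ a ⊃ □ Ǝ a.
Proof.
  assert (H : ⊢ □ a ⊃ Ɐ □ Ǝ a)
    by exact (imp_trans _ _ _ (box_mono _ _ (all_B a)) (box_all (Ǝ a))).
  exact (imp_trans _ _ _ (ex_mono _ _ H) (imp_trans _ _ _ (ex_all _) (all_T _))).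
Qed.

Lemma ex_dia a : ⊢ Ǝ ◇ a ⊃ ◇ Ǝ a.
Proof.
  assert (H1 : ⊢ □ ¬ Ǝ a ⊃ □ Ɐ ¬ a) by (apply box_mono, taut_thm; truth_table).
  assert (H2 : ⊢ Ɐ □ ¬ a ⊃ Ɐ ¬ ◇ a) by (apply all_mono, taut_thm; truth_table).
  apply (mp_taut3 _ _ _ _ H1 (box_all (¬ a)) H2); truth_table.
Qed.

Lemma ex_stable a : ⊢ a ⊃ □ a -> ⊢ Ǝ a ⊃ □ Ǝ a.
Proof. intro H. exact (imp_trans _ _ _ (ex_mono _ _ H) (ex_box a)). Qed.

(* Grz instantiated at [¬a] and contraposed. *)
Lemma grz_final_successor : ⊢ grz_axiom -> forall a, ⊢ a ⊃ ◇ (a ∧ □ (¬ a ⊃ □ ¬ a)).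
Proof.
  intros Hgrz a.
  pose proof (ms4x_subst G (subst_p (¬ a)) _ Hgrz) as grz_neg.
  change (⊢ □ (□ (¬ a ⊃ □ ¬ a) ⊃ ¬ a) ⊃ ¬ a) in grz_neg.
  assert (H : ⊢ □ ¬ (a ∧ □ (¬ a ⊃ □ ¬ a)) ⊃ □ (□ (¬ a ⊃ □ ¬ a) ⊃ ¬ a))
    by (apply box_mono, taut_thm; truth_table).
  apply (mp_taut2 _ _ _ grz_neg H); truth_table.
Qed.

Lemma mckinsey_of_grz : ⊢ grz_axiom -> forall a, ⊢ □ ◇ a ⊃ ◇ □ a.
Proof.
  intros Hgrz a.
  set (final := □ (¬ a ⊃ □ ¬ a)).
  set (P := □ ◇ a ∧ □ ¬ □ a).
  assert (dia_final : ⊢ ◇ a ⊃ ◇ (a ∧ final))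
    by exact (imp_trans _ _ _ (dia_mono _ _ (grz_final_successor Hgrz a)) (dia_4 _)).
  assert (P_stable : ⊢ P ⊃ □ P).
  { apply (mp_taut3 _ _ _ _ (box_4 (◇ a)) (box_4 (¬ □ a)) (box_and (□ ◇ a) (□ ¬ □ a))).
    truth_table. }
  assert (P_not_final : ⊢ P ⊃ ¬ (a ∧ final)).
  { assert (H : ⊢ final ⊃ □ (◇ a ⊃ a)) by (apply box_mono, taut_thm; truth_table).
    apply (mp_taut3 _ _ _ _ H (box_K (◇ a) a) (box_T (¬ □ a))); truth_table. }
  pose proof (imp_trans _ _ _ P_stable (box_mono _ _ P_not_final)) as P_never_final.
  apply (mp_taut3 _ _ _ _ (box_T (◇ a)) dia_final P_never_final); truth_table.
Qed.

Lemma lkur_of_n : ⊢ n_axiom -> ⊢ lkur_axiom.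
Proof.
  intro Hn.
  pose proof (ms4x_subst G (subst_p (¬ cp)) _ Hn) as n_neg.
  change (⊢ □ Ǝ ¬ cp ⊃ ◇ Ǝ □ ¬ cp) in n_neg.
  assert (H1 : ⊢ □ ¬ Ɐ cp ⊃ □ Ǝ ¬ cp).
  { apply box_mono, contrapos, all_mono, taut_thm; truth_table. }
  assert (H2 : ⊢ □ Ɐ ◇ □ cp ⊃ □ ¬ Ǝ □ ¬ cp).
  { apply box_mono, (mp_taut1 _ _ (all_mono _ _ (dia_mono _ _ (box_T cp)))); truth_table. }
  apply (mp_taut3 _ _ _ _ H1 n_neg H2); unfold lkur_axiom; truth_table.
Qed.

Lemma n_of_mckinsey_lkur :
  (forall a, ⊢ □ ◇ a ⊃ ◇ □ a) -> ⊢ lkur_axiom -> ⊢ n_axiom.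
Proof.
  intros McK Hl.
  pose proof (ms4x_subst G (subst_p (¬ cp)) _ Hl) as lkur_neg.
  change (⊢ □ Ɐ ◇ □ ¬ cp ⊃ ◇ Ɐ ¬ cp) in lkur_neg.
  assert (H1 : ⊢ □ ¬ Ǝ □ ◇ cp ⊃ □ Ɐ ◇ □ ¬ cp) by (apply box_mono, taut_thm; truth_table).
  assert (H2 : ⊢ ◇ Ǝ □ ◇ cp ⊃ ◇ Ǝ □ cp).
  { apply (imp_trans _ _ _ (dia_mono _ _ (ex_mono _ _ (McK cp)))).
    exact (imp_trans _ _ _ (dia_mono _ _ (ex_dia (□ cp))) (dia_4 _)). }
  apply (mp_taut3 _ _ _ _ lkur_neg H1 H2); unfold n_axiom; truth_table.
Qed.

Lemma lkur_of_box_kur : ⊢ □ Ɐ □ ◇ □ cp ⊃ □ ◇ □ Ɐ □ cp -> ⊢ lkur_axiom.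
Proof.
  intro Hk.
  assert (H : ⊢ □ Ɐ ◇ □ cp ⊃ □ Ɐ □ ◇ □ cp)
    by exact (boxed_imp_box _ _ (box_all _)).
  apply (imp_trans _ _ _ H), (imp_trans _ _ _ Hk), (imp_trans _ _ _ (box_T _)).
  exact (dia_mono _ _ (imp_trans _ _ _ (box_T _) (all_mono _ _ (box_T cp)))).
Qed.

Lemma box_kur_of_mckinsey_lkur :
  (forall a, ⊢ □ ◇ a ⊃ ◇ □ a) -> ⊢ lkur_axiom -> ⊢ □ Ɐ □ ◇ □ cp ⊃ □ ◇ □ Ɐ □ cp.
Proof.
  intros McK Hl.
  pose proof (ms4x_subst G (subst_p (□ cp)) _ Hl) as lkur_box.
  change (⊢ □ Ɐ ◇ □ □ cp ⊃ ◇ Ɐ □ cp) in lkur_box.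
  assert (H : ⊢ □ Ɐ □ ◇ □ cp ⊃ □ Ɐ ◇ □ □ cp).
  { apply box_mono, all_mono, (imp_trans _ _ _ (box_T _)), dia_mono, box_4. }
  apply boxed_imp_box, (imp_trans _ _ _ (boxed_imp_box _ _ (imp_trans _ _ _ H lkur_box))).
  exact (McK _).
Qed.

Lemma strict_imp_intro a b : ⊢ a ⊃ b -> ⊢ a ⥽ b.
Proof. intro H. apply box_nec, (mp_taut1 _ _ H); truth_table. Qed.

Lemma strict_imp_elim a b : ⊢ a ⥽ b -> ⊢ a ⊃ b.
Proof. intro H. apply (mp_taut2 _ _ _ H (box_T (¬ a ∨ b))); truth_table. Qed.

Lemma strict_imp2_intro_stable a b c :
  ⊢ a ∧ b ⊃ c -> ⊢ a ⊃ □ a -> ⊢ a ⥽ b ⥽ c.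
Proof.
  intros H Ha. apply strict_imp_intro, (imp_trans _ _ _ Ha), box_mono.
  apply (mp_taut1 _ _ H); truth_table.
Qed.

Lemma strict_not_not_box_dia a : ⊢ ((a ⥽ ⊥) ⥽ ⊥) ⊃ □ ◇ a.
Proof.
  apply box_mono.
  assert (H : ⊢ □ ¬ a ⊃ (a ⥽ ⊥)) by (apply box_mono, taut_thm; truth_table).
  apply (mp_taut1 _ _ H); truth_table.
Qed.

Lemma box_dia_strict_not_not a : ⊢ □ ◇ a ⊃ ((a ⥽ ⊥) ⥽ ⊥).
Proof.
  apply box_mono.
  assert (H : ⊢ (a ⥽ ⊥) ⊃ □ ¬ a) by (apply box_mono, taut_thm; truth_table).
  apply (mp_taut1 _ _ H); truth_table.
Qed.

Lemma godel_kur_axiom_iff : ⊢ godel kur_axiom <-> ⊢ □ Ɐ □ ◇ □ cp ⊃ □ ◇ □ Ɐ □ cp.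
Proof.
  change (godel kur_axiom)
    with (□ Ɐ ((□ cp ⥽ ⊥) ⥽ ⊥) ⥽ ((□ Ɐ □ cp ⥽ ⊥) ⥽ ⊥)).
  split; intro H.
  - apply (imp_trans _ _ _ (box_mono _ _ (all_mono _ _ (box_dia_strict_not_not _)))).
    exact (imp_trans _ _ _ (strict_imp_elim _ _ H) (strict_not_not_box_dia _)).
  - apply strict_imp_intro.
    apply (imp_trans _ _ _ (box_mono _ _ (all_mono _ _ (strict_not_not_box_dia _)))).
    exact (imp_trans _ _ _ H (box_dia_strict_not_not _)).
Qed.

Lemma godel_stable a : ⊢ godel a ⊃ □ godel a.
Proof.
  induction a as [n | | a IHa b IHb | a IHa b IHb | a _ b _ | a _ | a IHa]; simpl.
  - apply box_4.
  - apply taut_thm; truth_table.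
  - apply (mp_taut3 _ _ _ _ IHa IHb (box_and (godel a) (godel b))); truth_table.
  - apply (mp_taut3 _ _ _ _ IHa IHb (box_or (godel a) (godel b))); truth_table.
  - apply box_4.
  - apply box_4.
  - exact (ex_stable _ IHa).
Qed.

Lemma godel_isubst_equiv (s : nat -> ifml) a :
  ⊢ csubst (fun n => godel (s n)) (godel a) ⊃ godel (isubst s a) /\
  ⊢ godel (isubst s a) ⊃ csubst (fun n => godel (s n)) (godel a).
Proof.
  induction a as [n | | a [H1 H2] b [H3 H4] | a [H1 H2] b [H3 H4]
                 | a [H1 H2] b [H3 H4] | a [H1 H2] | a [H1 H2]]; simpl.
  - exact (conj (box_T _) (godel_stable _)).
  - split; apply taut_thm; truth_table.
  - split; [apply (mp_taut2 _ _ _ H1 H3) | apply (mp_taut2 _ _ _ H2 H4)]; truth_table.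
  - split; [apply (mp_taut2 _ _ _ H1 H3) | apply (mp_taut2 _ _ _ H2 H4)]; truth_table.
  - split; apply box_mono; [apply (mp_taut2 _ _ _ H2 H3) | apply (mp_taut2 _ _ _ H1 H4)];
      truth_table.
  - split; apply box_mono, all_mono; assumption.
  - split; apply ex_mono; assumption.
Qed.

Lemma godel_ipc b : IPC_thm b -> ⊢ godel b.
Proof.
  induction 1 as [a b | a b c | a b | a b | a b | a b | a b | a b c | a
                 | a b _ IHab _ IHa]; simpl.
  - apply strict_imp2_intro_stable; [apply taut_thm; truth_table | apply godel_stable].
  - apply strict_imp2_intro_stable; [ | apply box_4].
    set (A := godel a); set (B := godel b); set (C := godel c).
    assert (H1 : ⊢ (A ⥽ B ⥽ C) ⊃ □ (¬ A ∨ (¬ B ∨ C))).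
    { apply box_mono, (mp_taut1 _ _ (box_T (¬ B ∨ C))); truth_table. }
    assert (H2 : ⊢ □ ((¬ A ∨ (¬ B ∨ C)) ∧ (¬ A ∨ B)) ⊃ (A ⥽ C))
      by (apply box_mono, taut_thm; truth_table).
    apply (mp_taut3 _ _ _ _ H1 (box_and (¬ A ∨ (¬ B ∨ C)) (¬ A ∨ B)) H2); truth_table.
  - apply strict_imp_intro, taut_thm; truth_table.
  - apply strict_imp_intro, taut_thm; truth_table.
  - apply strict_imp2_intro_stable; [apply taut_thm; truth_table | apply godel_stable].
  - apply strict_imp_intro, taut_thm; truth_table.
  - apply strict_imp_intro, taut_thm; truth_table.
  - apply strict_imp2_intro_stable; [ | apply box_4].
    apply (imp_trans _ _ _ (box_and _ _)), box_mono, taut_thm; truth_table.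
  - apply strict_imp_intro, taut_thm; truth_table.
  - exact (ms4x_mp G _ _ (strict_imp_elim _ _ IHab) IHa).
Qed.

Lemma godel_mipc_axiom b : MIPC_axiom b -> ⊢ godel b.
Proof.
  destruct 1; simpl; set (P := □ CVar 0); set (Q := □ CVar 1).
  - apply and_intro; apply strict_imp_intro.
    + assert (HP : ⊢ □ Ɐ (P ∧ Q) ⊃ □ Ɐ P) by (apply box_mono, all_mono, taut_thm; truth_table).
      assert (HQ : ⊢ □ Ɐ (P ∧ Q) ⊃ □ Ɐ Q) by (apply box_mono, all_mono, taut_thm; truth_table).
      apply (mp_taut2 _ _ _ HP HQ); truth_table.
    + exact (imp_trans _ _ _ (box_and _ _) (box_mono _ _ (all_and P Q))).
  - apply strict_imp_intro. exact (imp_trans _ _ _ (box_T _) (all_T _)).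
  - apply strict_imp_intro, boxed_imp_box.
    exact (imp_trans _ _ _ (box_mono _ _ (all_4 P)) (box_all (Ɐ P))).
  - apply and_intro; apply strict_imp_intro; [apply ex_or | apply or_ex].
  - apply strict_imp_intro, ex_T.
  - apply strict_imp_intro, ex_4.
  - apply strict_imp_intro, ex_and_ex.
  - apply strict_imp_intro. exact (imp_trans _ _ _ (ex_box (Ɐ P)) (box_mono _ _ (ex_all P))).
  - apply strict_imp_intro.
    exact (imp_trans _ _ _ (ex_stable _ (box_4 _)) (box_mono _ _ (all_5 P))).
Qed.

Lemma godel_MIPC_ext (Γ : ifml -> Prop) :
  (forall b, Γ b -> ⊢ godel b) -> forall b, MIPC_ext Γ b -> ⊢ godel b.
Proof.
  intros HΓ b Hb.
  induction Hb as [b Hb | b Hb | b Hb | a b _ IHab _ IHa | s a _ IHa | a _ IHa].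
  - exact (godel_ipc b Hb).
  - exact (godel_mipc_axiom b Hb).
  - exact (HΓ b Hb).
  - exact (ms4x_mp G _ _ (strict_imp_elim _ _ IHab) IHa).
  - exact (ms4x_mp G _ _ (proj1 (godel_isubst_equiv s a)) (ms4x_subst G _ _ IHa)).
  - exact (box_nec _ (all_nec _ IHa)).
Qed.

End MS4_derivations.

Lemma MS4_ext_sub (G1 G2 : cfml -> Prop) :
  (forall a, G1 a -> MS4_ext G2 a) -> forall a, MS4_ext G1 a -> MS4_ext G2 a.
Proof.
  intros H a Ha.
  induction Ha as [a Ha | a Ha | a Ha | a b _ IHab _ IHa | s a _ IHa | a _ IHa | a _ IHa].
  - exact (ms4x_taut G2 a Ha).
  - exact (ms4x_ax G2 a Ha).
  - exact (H a Ha).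
  - exact (ms4x_mp G2 a b IHab IHa).
  - exact (ms4x_subst G2 s a IHa).
  - exact (ms4x_necbox G2 a IHa).
  - exact (ms4x_necall G2 a IHa).
Qed.

Lemma axiomatic_sub (G : cfml -> Prop) ax :
  MS4_ext G ax -> forall a, MS4_ext (fun b => b = ax) a -> MS4_ext G a.
Proof. intro Hax. apply MS4_ext_sub. intros a ->. exact Hax. Qed.

Lemma GKur_sub (G : cfml -> Prop) :
  MS4_ext G (godel kur_axiom) -> forall a, GKur a -> MS4_ext G a.
Proof.
  intro Hk. apply MS4_ext_sub. intros a [b [Hb ->]].
  apply (godel_MIPC_ext G (fun b => b = kur_axiom)); [intros c -> | ]; assumption.
Qed.

Lemma axiom_in ax : MS4_ext (fun b => b = ax) ax.
Proof. exact (ms4x_extra _ _ eq_refl). Qed.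

Lemma godel_kur_axiom_in_GKur : GKur (godel kur_axiom).
Proof.
  apply ms4x_extra. exists kur_axiom. split; [apply mipcx_extra | ]; reflexivity.
Qed.

Lemma join_l (L1 L2 : cfml -> Prop) a : L1 a -> join L1 L2 a.
Proof. intro H. exact (ms4x_extra _ _ (or_introl H)). Qed.

Lemma join_r (L1 L2 : cfml -> Prop) a : L2 a -> join L1 L2 a.
Proof. intro H. exact (ms4x_extra _ _ (or_intror H)). Qed.

Lemma join_mono (L1 L2 L3 : cfml -> Prop) :
  (forall a, L2 a -> join L1 L3 a) -> forall a, join L1 L2 a -> join L1 L3 a.
Proof.
  intro H. apply MS4_ext_sub. intros a [H1 | H2]; [apply join_l | apply H]; assumption.
Qed.

Theorem proposition5p10 :
  (forall a : cfml, join MGrz GKur a <-> join MGrz LKur a) /\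
  (forall a : cfml, join MGrz LKur a <-> join MGrz N a).
Proof.
  assert (mckinsey_in : forall L a, join MGrz L (□ ◇ a ⊃ ◇ □ a))
    by (intros; apply mckinsey_of_grz, join_l, axiom_in).
  assert (lkur_in : join MGrz LKur lkur_axiom) by apply join_r, axiom_in.
  assert (n_in : join MGrz N n_axiom) by apply join_r, axiom_in.
  assert (gkur_in : join MGrz GKur (godel kur_axiom))
    by apply join_r, godel_kur_axiom_in_GKur.
  split; intro a; split; apply join_mono.
  - apply GKur_sub, godel_kur_axiom_iff, box_kur_of_mckinsey_lkur;
      [apply mckinsey_in | exact lkur_in].
  - apply axiomatic_sub, lkur_of_box_kur, godel_kur_axiom_iff, gkur_in.
  - apply axiomatic_sub, lkur_of_n, n_in.
  - apply axiomatic_sub, n_of_mckinsey_lkur; [apply mckinsey_in | exact lkur_in].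
Qed.
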